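(* Let $\mathcal{G}=(V,\mathit{Act},\mathcal{R})$ be a normed BPA system. For all $\alpha,\beta,\gamma\in V^*$: $\alpha\gamma\sim\beta\gamma$ if and only if $\alpha\sim_{R_\gamma}\beta$.
   Context: A BPA system $\mathcal{G}=(V,\mathit{Act},\mathcal{R})$: finite variables $V$, finite actions $\mathit{Act}$ (possibly containing the silent action $\tau$), rules $A\xrightarrow{a}\alpha$ ($A\in V,\alpha\in V^*$). LTS $\mathcal{L}_\mathcal{G}$: states $V^*$, transitions $A\beta\xrightarrow{a}\alpha\beta$ for rules $A\xrightarrow{a}\alpha$, $\beta\in V^*$. $\mathcal{G}$ is normed if every variable can reach $\varepsilon$ by a sequence of transitions. Branching bisimilarity $\sim$ on an LTS: the largest relation $\mathcal{B}$ such that for $(s,t)\in\mathcal{B}$ each move $s\xrightarrow{a}s'$ is matched either by $a=\tau$ and $(s',t)\in\mathcal{B}$, or by a path $t=t_0\xrightarrow{\tau}\cdots\xrightarrow{\tau}t_k\xrightarrow{a}t'$ with $(s',t')\in\mathcal{B}$, $(s,t_i)\in\mathcal{B}$ for $i\in[1,k]$; and symmetrically. $\sim$ without subscript refers to $\mathcal{L}_\mathcal{G}$. For $\gamma\in V^*$, $R_\gamma=\{X\in V\mid X\gamma\sim\gamma\}$. For $R\subseteq V$, the LTS $\mathcal{L}_{\mathcal{G},R}$ is obtained from $\mathcal{L}_\mathcal{G}$ by removing all outgoing transitions of every state $\alpha\in R^*$; $\alpha\sim_R\beta$ means $\alpha$ and $\beta$ are branching bisimilar in $\mathcal{L}_{\mathcal{G},R}$.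 *)

From mathcomp Require Import all_boot.
From Stdlib Require Import Relations.
Set Implicit Arguments. Unset Strict Implicit. Unset Printing Implicit Defensive.

(** A BPA system: finite set of variables [V], finite set of actions [Act]
    with a designated silent action [tau], and a finite list of rules
    [(A, a, alpha)] standing for [A --a--> alpha]. *)
Record BPA := mkBPA {
  bpa_V : finType;
  bpa_Act : finType;
  bpa_tau : bpa_Act;
  bpa_rules : seq (bpa_V * bpa_Act * seq bpa_V)
}.

Definition bpa_step (G : BPA) (s : seq (bpa_V G)) (a : bpa_Act G)
    (t : seq (bpa_V G)) : Prop :=
  exists (A : bpa_V G) (alpha beta : seq (bpa_V G)),
    s = A :: beta /\ (A, a, alpha) \in bpa_rules G /\ t = alpha ++ beta.

(** L_{G,R}: remove all outgoing transitions of states in R^*. *)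
Definition in_star (G : BPA) (R : bpa_V G -> Prop) (s : seq (bpa_V G)) : Prop :=
  forall X, X \in s -> R X.

Definition bpa_step_R (G : BPA) (R : bpa_V G -> Prop) (s : seq (bpa_V G))
    (a : bpa_Act G) (t : seq (bpa_V G)) : Prop :=
  ~ in_star R s /\ bpa_step s a t.

Definition normed (G : BPA) : Prop :=
  forall A : bpa_V G,
    clos_refl_trans _ (fun s t => exists a, bpa_step s a t) [:: A] [::].

Section Branching.
Variables (S L : Type) (tau : L) (T : S -> L -> S -> Prop).

(** [tau_path B s t u]: a path t = t_0 -tau-> ... -tau-> t_k = u with
    B s t_i for all i in [1,k]. *)
Inductive tau_path (B : S -> S -> Prop) (s : S) : S -> S -> Prop :=
| tau_path_nil t : tau_path B s t t
| tau_path_cons t t' u : T t tau t' -> B s t' -> tau_path B s t' u ->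
    tau_path B s t u.

Definition bb_transfer (B : S -> S -> Prop) : Prop :=
  forall s t, B s t -> forall a s', T s a s' ->
    (a = tau /\ B s' t) \/
    (exists tk t', tau_path B s t tk /\ T tk a t' /\ B s' t').

Definition branching_bisimulation (B : S -> S -> Prop) : Prop :=
  bb_transfer B /\ bb_transfer (fun s t => B t s).

Definition branching_bisimilar (s t : S) : Prop :=
  exists B, branching_bisimulation B /\ B s t.
End Branching.

Definition bisim (G : BPA) (s t : seq (bpa_V G)) : Prop :=
  branching_bisimilar (bpa_tau G) (@bpa_step G) s t.

Definition bisim_R (G : BPA) (R : bpa_V G -> Prop) (s t : seq (bpa_V G)) : Prop :=
  branching_bisimilar (bpa_tau G) (@bpa_step_R G R) s t.

Definition R_of (G : BPA) (gamma : seq (bpa_V G)) : bpa_V G -> Prop :=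
  fun X => bisim (X :: gamma) gamma.

From Stdlib Require Import Classical Relations.
From mathcomp Require Import all_boot zify.
Set Implicit Arguments. Unset Strict Implicit. Unset Printing Implicit Defensive.

(* Stuttering: if s ~ t and s -tau->* u -tau->* t, then u ~ t.
   In a normed BPA the least number of visible actions leading to the empty word
   cannot grow along ~ and is additive over concatenation.  So if X al gam ~ gam,
   then X al reaches the empty word silently and stuttering gives al gam ~ gam;
   hence al is a word over R_gam iff al gam ~ gam.  A word al gam with al not over
   R_gam moves only through al, while for al over R_gam it behaves like gam.  Thus
   {(al gam, be gam) | al ~_R be} is a branching bisimulation up to ~ in L_G, and
   {(al, be) | al gam ~ be gam} is one up to ~_R in L_{G,R}. *)

Section BranchingBisimilarity.
Variables (S L : Type) (tau : L) (T : S -> L -> S -> Prop).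
Local Notation tpath := (tau_path tau T).
Local Notation bbisim := (branching_bisimilar tau T).
Local Notation tau_reach := (clos_refl_trans S (fun x y => T x tau y)).

Definition transfer_at (B : S -> S -> Prop) (s t : S) : Prop :=
  forall a s', T s a s' -> (a = tau /\ B s' t) \/
    (exists tk t', tpath B s t tk /\ T tk a t' /\ B s' t').

Definition relcomp (B1 B2 : S -> S -> Prop) (x z : S) : Prop :=
  exists y, B1 x y /\ B2 y z.

Lemma tau_path_mono (C D : S -> S -> Prop) s s' t u :
  (forall y, C s y -> D s' y) -> tpath C s t u -> tpath D s' t u.
Proof.
move=> CD; elim=> [t0|t0 t1 u0 Ht Hc _ IH]; first exact: tau_path_nil.
exact: tau_path_cons Ht (CD _ Hc) IH.
Qed.

Lemma tau_path_cat C s t u v : tpath C s t u -> tpath C s u v -> tpath C s t v.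
Proof. by elim=> // t0 t1 u0 Ht Hc _ IH /IH; apply: tau_path_cons Ht Hc. Qed.

Lemma tau_path_last C s t u : tpath C s t u -> u = t \/ C s u.
Proof. by elim=> [t0|t0 t1 u0 Ht Hc _ [->|IH]]; [left|right|right]. Qed.

Lemma tau_path_rcons C s t u : tpath C s t u ->
  u = t \/ exists u0, tpath C s t u0 /\ T u0 tau u /\ C s u.
Proof.
elim=> [t0|t0 t1 u0 Ht Hc Hp [->|[u1 [H1 [H2 H3]]]]]; first by left.
- by right; exists t0; split; [exact: tau_path_nil|].
- by right; exists u1; split; [exact: tau_path_cons Ht Hc H1|].
Qed.

Lemma tau_path_tau_reach C s t u : tpath C s t u -> tau_reach t u.
Proof.
elim=> [t0|t0 t1 u0 Ht _ _ IH]; first exact: rt_refl.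
exact: rt_trans (rt_step _ _ _ _ Ht) IH.
Qed.

Lemma tau_path_stuck C s t u : (forall a t', ~ T t a t') -> tpath C s t u -> u = t.
Proof. by move=> + H; case: H => // t0 t1 u0 Ht _ _ /(_ _ _ Ht). Qed.

Lemma transfer_at_mono B C s t :
  (forall x y, B x y -> C x y) -> transfer_at B s t -> transfer_at C s t.
Proof.
move=> BC Htr a s' /Htr [[-> HB]|[tk [t' [Hp [Ht HB]]]]]; first by left; split; [|apply: BC].
right; exists tk, t'; split; last by split; [|apply: BC].
by apply: tau_path_mono Hp => y; apply: BC.
Qed.

Lemma bbisim_sym s t : bbisim s t -> bbisim t s.
Proof. by move=> [B [[H1 H2] Hst]]; exists (fun x y => B y x). Qed.

Lemma bbisim_transfer s t : bbisim s t -> transfer_at bbisim s t.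
Proof.
move=> [B [[H1 H2] Hst]]; apply: (transfer_at_mono (B := B)) (H1 _ _ Hst).
by move=> x y Hxy; exists B.
Qed.

Lemma bbisim_refl s : bbisim s s.
Proof.
exists eq; split=> //; split=> x y Exy a s' Hs; subst; right;
  by eexists; exists s'; split; [exact: tau_path_nil|].
Qed.

Lemma bbisim_stuck_step s t a s' : (forall b t', ~ T t b t') ->
  bbisim s t -> T s a s' -> a = tau /\ bbisim s' t.
Proof.
move=> stuck /bbisim_transfer Hst Hs.
case: (Hst _ _ Hs) => [//|[tk [t' [Hp [Ht _]]]]].
by move: Ht; rewrite (tau_path_stuck stuck Hp) => /stuck.
Qed.

Lemma transfer_at_tau_prepend C x y y1 :
  T y tau y1 -> C x y1 -> transfer_at C x y1 -> transfer_at C x y.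
Proof.
move=> Hy Cxy1 Htr a x' /Htr [[-> Cx'y1]|[tk [t' [Hp [Ht Hc]]]]].
  by right; exists y, y1; split; [exact: tau_path_nil|].
by right; exists tk, t'; split=> //; exact: tau_path_cons Hy Cxy1 Hp.
Qed.

Lemma bb_transfer_tau_path B1 B2 s x y : bb_transfer tau T B2 ->
  tpath B1 s x y -> B1 s x -> forall z, B2 x z ->
  exists z', tpath (relcomp B1 B2) s z z' /\ B2 y z'.
Proof.
move=> H2; elim=> [x0 _ z Hz|x0 x1 y0 Hx Hc _ IH Hsx z Hz].
  by exists z; split=> //; exact: tau_path_nil.
case: (H2 _ _ Hz _ _ Hx) => [[_ Hz']|[zk [z1 [Hp1 [Hz1 Hb]]]]]; first exact: IH.
have [z' [Hp2 Hb2]] := IH Hc _ Hb.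
exists z'; split=> //; apply: tau_path_cat.
  by apply: tau_path_mono Hp1 => w Hw; exists x0.
by apply: tau_path_cons Hz1 _ Hp2; exists x1.
Qed.

Lemma bb_transfer_relcomp B1 B2 : bb_transfer tau T B1 -> bb_transfer tau T B2 ->
  bb_transfer tau T (relcomp B1 B2).
Proof.
move=> H1 H2 s t [u [Hsu Hut]] a s' Hs.
case: (H1 _ _ Hsu a s' Hs) => [[-> Hs'u]|[uk [u' [Hp [Hu Hs'u']]]]].
  by left; split=> //; exists u.
have [tk [Hpt Hukt]] := bb_transfer_tau_path H2 Hp Hsu Hut.
have Hsuk : B1 s uk by case: (tau_path_last Hp) => [->|].
case: (H2 _ _ Hukt _ _ Hu) => [[Ea Hb]|[zk [z' [Hp1 [Hz Hb]]]]].
  subst a; case: (tau_path_rcons Hpt) => [Etk|[u0 [Hp0 [Ht0 _]]]].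
    by subst; left; split=> //; exists u'.
  by right; exists u0, tk; split=> //; split=> //; exists u'.
right; exists zk, z'; split; last by split=> //; exists u'.
by apply: tau_path_cat Hpt _; apply: tau_path_mono Hp1 => w Hw; exists uk.
Qed.

Lemma bbisim_trans s u t : bbisim s u -> bbisim u t -> bbisim s t.
Proof.
move=> [B1 [[H1 H1'] Hsu]] [B2 [[H2 H2'] Hut]].
exists (relcomp B1 B2); split; last by exists u.
split; first exact: bb_transfer_relcomp.
have H := bb_transfer_relcomp H2' H1'.
have swap x y : relcomp (fun a b => B2 b a) (fun a b => B1 b a) x y -> relcomp B1 B2 y x.
  by move=> [w [? ?]]; exists w.
move=> x y [z [Hyz Hzx]] a x' /(H x y) [|[-> /swap Hb]|[tk [t' [Hp [Ht /swap Hb]]]]].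
- by exists z.
- by left.
- right; exists tk, t'; split=> //.
  by apply: tau_path_mono Hp => w /swap.
Qed.

Lemma bbisim_upto (B : S -> S -> Prop) : (forall x y, B x y -> B y x) ->
  (forall x y, B x y -> transfer_at (fun a b => B a b \/ bbisim a b) x y) ->
  forall x y, B x y -> bbisim x y.
Proof.
move=> Bsym Btr x y Hxy.
pose C a b := B a b \/ bbisim a b.
have Csym a b : C a b -> C b a by case=> [/Bsym|/bbisim_sym]; [left|right].
have Ctr : bb_transfer tau T C.
  move=> a b [/Btr //|/bbisim_transfer H].
  by apply: transfer_at_mono H => ? ? ?; right.
exists C; split; last by left.
by split=> // a b /Csym /Ctr; apply: transfer_at_mono => ? ? /Csym.
Qed.

Lemma bbisim_transfer_upto (B : S -> S -> Prop) s t :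
  bbisim s t -> transfer_at (fun a b => B a b \/ bbisim a b) s t.
Proof. by move=> /bbisim_transfer; apply: transfer_at_mono => ? ? ?; right. Qed.

Lemma bbisim_match_tau_path (C : S -> S -> Prop) (P : S -> Prop) x z p q y :
  (forall r w, P r -> bbisim r w -> C x w) -> P p ->
  tpath (fun _ => P) z p q -> bbisim p y -> exists y', tpath C x y y' /\ bbisim q y'.
Proof.
move=> PC Pp Hpath; elim: Hpath y Pp => [p0 y _ Hy|p0 p1 q0 Hst Pp1 _ IH y Pp0 Hy].
  by exists y; split=> //; exact: tau_path_nil.
case: (bbisim_transfer Hy Hst) => [[_ H]|[tk [t' [Hp [Ht Hb]]]]]; first exact: IH.
have [y' [Hp' Hb']] := IH _ Pp1 Hb.
exists y'; split=> //; apply: tau_path_cat.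
  by apply: tau_path_mono Hp => w; apply: PC.
exact: tau_path_cons Ht (PC _ _ Pp1 Hb) Hp'.
Qed.

Lemma tau_reach_tau_path (P : S -> Prop) z p q :
  tau_reach p q -> (forall r, tau_reach p r -> tau_reach r q -> P r) ->
  tpath (fun _ => P) z p q.
Proof.
elim=> [a b Hab|a|a b c Hab IH1 Hbc IH2] HP.
- apply: (tau_path_cons Hab); last exact: tau_path_nil.
  by apply: HP; [exact: rt_step Hab|exact: rt_refl].
- exact: tau_path_nil.
- apply: tau_path_cat (IH1 _) (IH2 _) => r Hr1 Hr2; apply: HP=> //.
  + exact: rt_trans Hr2 Hbc.
  + exact: rt_trans Hab Hr1.
Qed.

Section Stuttering.
Variables s t : S.
Hypothesis Hst : bbisim s t.

Let on_path r := tau_reach s r /\ tau_reach r t.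
Let B x y := exists p q, on_path p /\ on_path q /\ bbisim x p /\ bbisim y q.
Let C x y := B x y \/ bbisim x y.

Let tau_reach_on_path p q : on_path p -> on_path q -> tau_reach p q ->
  tpath (fun _ => on_path) s p q.
Proof.
move=> [Hsp _] [_ Hqt] Hpq; apply: tau_reach_tau_path Hpq _ => r Hpr Hrq.
by split; [exact: rt_trans Hsp Hpr|exact: rt_trans Hrq Hqt].
Qed.

(* [y ~ q] walks silently to [t ~ s], then to [p ~ x], then along the answer
   of [p] to [v], staying [C]-related to [x] throughout. *)
Let B_match_silent x y p q v : on_path p -> on_path q -> bbisim x p -> bbisim y q ->
  tpath bbisim x p v -> exists y', tpath C x y y' /\ bbisim v y'.
Proof.
move=> Pp Pq Hxp Hyq Hpv.
have PC r w : on_path r -> bbisim r w -> C x w.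
  by move=> Pr Hrw; left; exists p, r; do 3?split=> //; apply: bbisim_sym.
have [Ps Pt] : on_path s /\ on_path t.
  have [Hsp Hpt] := Pp; have Hst' : tau_reach s t by exact: rt_trans Hsp Hpt.
  by do 2!split=> //; exact: rt_refl.
have [y1 [Y1 H1]] := bbisim_match_tau_path PC Pq
  (tau_reach_on_path Pq Pt (proj2 Pq)) (bbisim_sym Hyq).
have [y2 [Y2 H2]] := bbisim_match_tau_path PC Ps
  (tau_reach_on_path Ps Pp (proj1 Pp)) (bbisim_trans Hst H1).
have [y3 [Y3 H3]] : exists y', tpath C x y2 y' /\ bbisim v y'.
  apply: (@bbisim_match_tau_path C (bbisim x) _ x p) H2 => //.
  - by move=> r w Hxr Hrw; right; exact: bbisim_trans Hxr Hrw.
  - exact: tau_path_mono Hpv.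
by exists y3; split=> //; apply: tau_path_cat Y1 (tau_path_cat Y2 Y3).
Qed.

Let B_transfer x y : B x y -> transfer_at C x y.
Proof.
move=> [p [q [Pp [Pq [Hxp Hyq]]]]] a x' Hx.
case: (bbisim_transfer Hxp Hx) => [[-> Hx'p]|[v [v' [Hpv [Hv Hx'v']]]]].
  by left; split=> //; left; exists p, q.
have [y' [Y Hvy']] := B_match_silent Pp Pq Hxp Hyq Hpv.
have Hxv : bbisim x v by case: (tau_path_last Hpv) => [->|].
case: (bbisim_transfer Hvy' Hv) => [[Ea Hb]|[z0 [z' [Hp0 [Hz Hb]]]]].
  subst a; case: (tau_path_rcons Y) => [Ey|[u0 [Hp0 [Ht0 _]]]].
    by subst; left; split=> //; right; apply: bbisim_trans Hx'v' Hb.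
  by right; exists u0, y'; do 2?split=> //; right; apply: bbisim_trans Hx'v' Hb.
right; exists z0, z'; split; last by split=> //; right; apply: bbisim_trans Hx'v' Hb.
by apply: tau_path_cat Y _; apply: tau_path_mono Hp0 => w /(bbisim_trans Hxv); right.
Qed.

Lemma bbisim_stutter u : tau_reach s u -> tau_reach u t -> bbisim u t.
Proof.
have Bsym x y : B x y -> B y x by move=> [p [q [? [? [? ?]]]]]; exists q, p.
move=> Hsu Hut; apply: (bbisim_upto Bsym B_transfer).
exists u, t; split; first by split.
split; first by split; [exact: rt_trans Hsu Hut|exact: rt_refl].
by split; exact: bbisim_refl.
Qed.
End Stuttering.
End BranchingBisimilarity.

Lemma tau_path_map (S S' L : Type) (tau : L) (T : S -> L -> S -> Prop)
    (T' : S' -> L -> S' -> Prop) (f : S -> S') (C : S -> S -> Prop)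
    (D : S' -> S' -> Prop) s s' t u :
  (forall x y, T x tau y -> T' (f x) tau (f y)) -> (forall y, C s y -> D s' (f y)) ->
  tau_path tau T C s t u -> tau_path tau T' D s' (f t) (f u).
Proof.
move=> HT HC; elim=> [t0|t0 t1 u0 Ht Hc _ IH]; first exact: tau_path_nil.
exact: tau_path_cons (HT _ _ Ht) (HC _ Hc) IH.
Qed.

Section BPAWords.
Variable G : BPA.
Local Notation V := (bpa_V G).
Local Notation tau := (bpa_tau G).
Local Notation step := (@bpa_step G).
Local Notation bisim := (@bisim G).
Local Notation tau_reach := (clos_refl_trans _ (fun x y => step x tau y)).

Lemma bpa_step_cat (r s : seq V) a t : r <> [::] -> step (r ++ s) a t ->
  exists2 r', step r a r' & t = r' ++ s.
Proof.
case: r => [//|A r] _ [B [al [be [[<- <-] [Hr ->]]]]].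
by exists (al ++ r); [exists A, al, r|rewrite catA].
Qed.

Lemma bpa_step_catr (r r' s : seq V) a : step r a r' -> step (r ++ s) a (r' ++ s).
Proof.
move=> [A [al [be [-> [Hr ->]]]]].
by exists A, al, (be ++ s); rewrite catA.
Qed.

Lemma bpa_step_nil a (t : seq V) : ~ step [::] a t.
Proof. by move=> [A [al [be []]]]. Qed.

Lemma in_star_nil (R : V -> Prop) : in_star R [::].
Proof. by []. Qed.

Lemma not_in_star_neq_nil (R : V -> Prop) (r : seq V) : ~ in_star R r -> r <> [::].
Proof. by move=> Hr Er; apply: Hr; rewrite Er. Qed.

Lemma tau_reach_catr (r r' s : seq V) : tau_reach r r' -> tau_reach (r ++ s) (r' ++ s).
Proof.
elim=> [x y Hxy|x|x y z _ IH1 _ IH2]; first exact/rt_step/bpa_step_catr.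
  exact: rt_refl.
exact: rt_trans IH1 IH2.
Qed.

Inductive vpath : seq V -> seq V -> nat -> Prop :=
| vpath_nil s : vpath s s 0
| vpath_cons s a s1 t n : step s a s1 -> vpath s1 t n -> vpath s t ((a != tau) + n).

Lemma vpath_cat s u t n m : vpath s u n -> vpath u t m -> vpath s t (n + m).
Proof. by elim=> // s0 a s1 u0 n0 H _ IH /IH; rewrite -addnA; apply: vpath_cons H. Qed.

Lemma vpath_catr r r' s n : vpath r r' n -> vpath (r ++ s) (r' ++ s) n.
Proof.
elim=> [r0|r0 a r1 t n0 H _ IH]; first exact: vpath_nil.
exact: vpath_cons (bpa_step_catr _ H) IH.
Qed.

Lemma vpath0P s t : vpath s t 0 <-> tau_reach s t.
Proof.
split.
  move E: 0 => e H; elim: H E => [s0|s0 a s1 t0 n0 H _ IH]; first by move=> _; exact: rt_refl.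
  case: eqVneq H => [-> H /= E|//]; exact: rt_trans (rt_step _ _ _ _ H) (IH E).
elim=> [x y Hxy|x|x y z _ IH1 _ IH2]; last exact: vpath_cat IH1 IH2.
  by have := vpath_cons Hxy (vpath_nil y); rewrite eqxx.
exact: vpath_nil.
Qed.

Lemma vpath_split_cat r q n : vpath (r ++ q) [::] n ->
  exists n1 n2, [/\ n = n1 + n2, vpath r [::] n1 & vpath q [::] n2].
Proof.
move Es: (r ++ q) => s; move Ee: [::] => e H.
elim: H r Es Ee => [s0|s0 a s1 t n0 H Hw IH] r Es Ee.
  move: Es; rewrite -Ee; case: r => //= ->.
  by exists 0, 0; split=> //; exact: vpath_nil.
subst t; case: r Es => [|A r] Es.
  exists 0, ((a != tau) + n0); split=> //; first exact: vpath_nil.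
  by rewrite (Es : q = s0); exact: vpath_cons H Hw.
rewrite -Es in H; have [//|r' Hr Hs1] := bpa_step_cat _ H.
have [n1 [n2 [-> H1 H2]]] := IH _ (esym Hs1) erefl.
by exists ((a != tau) + n1), n2; split=> //; [rewrite addnA|exact: vpath_cons Hr H1].
Qed.

Lemma bisim_catl (r d d' : seq V) : bisim d d' -> bisim (r ++ d) (r ++ d').
Proof.
pose B x y := exists r d d', [/\ x = r ++ d, y = r ++ d' & bisim d d'].
move=> Hd; apply: (@bbisim_upto _ _ _ _ B); last by exists r, d, d'.
  by move=> x y [r0 [d0 [d1 [-> -> H]]]]; exists r0, d1, d0; split=> //; exact: bbisim_sym.
move=> x y [[|A r0] [d0 [d1 [-> -> H]]]]; first exact: bbisim_transfer_upto.
move=> a x' /bpa_step_cat [//|r' Hr ->].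
right; exists ((A :: r0) ++ d1), (r' ++ d1); split; first exact: tau_path_nil.
by split; [exact: bpa_step_catr|left; exists r', d0, d1].
Qed.

Lemma bpa_step_R_star (R : V -> Prop) s a t : in_star R s -> ~ bpa_step_R R s a t.
Proof. by move=> Hs []. Qed.

Section Normed.
Hypothesis hG : normed G.

Lemma vpath_to_nil w : exists n, vpath w [::] n.
Proof.
have vpath_rt x y : clos_refl_trans _ (fun s t => exists a, step s a t) x y ->
    exists n, vpath x y n.
  elim=> [s t [a H]|s|s u t _ [n1 H1] _ [n2 H2]].
  - by exists ((a != tau) + 0); exact: vpath_cons H (vpath_nil t).
  - by exists 0; exact: vpath_nil.
  - by exists (n1 + n2); exact: vpath_cat H1 H2.
elim: w => [|X w [n IH]]; first by exists 0; exact: vpath_nil.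
have [n1 H1] := vpath_rt _ _ (hG X).
by exists (n1 + n); exact: vpath_cat (vpath_catr w H1) IH.
Qed.

Lemma bisim_nil_tau_reach s : bisim s [::] -> tau_reach s [::].
Proof.
have [n] := vpath_to_nil s; move Ee: [::] => e H; elim: H Ee => [s0|s0 a s1 t n0 H _ IH] Ee Hb.
  exact: rt_refl.
subst t; have [Ea Hb1] := bbisim_stuck_step (@bpa_step_nil) Hb H; subst a.
exact: rt_trans (rt_step _ _ _ _ H) (IH erefl Hb1).
Qed.

Lemma vpath_nil_bisim s t n : bisim s t -> vpath t [::] n ->
  exists2 m, m <= n & vpath s [::] m.
Proof.
move=> Hb H; move Ee: [::] H Hb => e H; elim: H s Ee => [t0|t0 a t1 t2 n0 H _ IH] s Ee Hb.
  by subst t0; exists 0 => //; apply/vpath0P/bisim_nil_tau_reach.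
case: (bbisim_transfer (bbisim_sym Hb) H) => [[_ Hb1]|[tk [t' [Hp [Ht Hb1]]]]].
  by have [m Hm Hw] := IH s Ee (bbisim_sym Hb1); exists m => //; rewrite (leq_trans Hm) ?leq_addl.
have [m Hm Hw] := IH t' Ee (bbisim_sym Hb1).
exists ((a != tau) + m); first by rewrite leq_add2l.
have /vpath0P Hs := tau_path_tau_reach Hp.
exact: vpath_cat Hs (vpath_cons Ht Hw).
Qed.

Lemma vpath_nil_min w : exists n0, vpath w [::] n0 /\ forall m, vpath w [::] m -> n0 <= m.
Proof.
have [n Hn] := vpath_to_nil w; apply: NNPP => Hmin.
suff lb k m : vpath w [::] m -> k <= m by have := lb n.+1 n Hn; rewrite ltnn.
elim: k m => // k IH m Hm; rewrite ltn_neqAle IH // andbT.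
by apply/eqP => Ek; apply: Hmin; exists k; split; [rewrite Ek|].
Qed.

Section Gamma.
Variable gam : seq V.
Local Notation R := (R_of gam).

Lemma in_star_bisim_cat al : in_star R al -> bisim (al ++ gam) gam.
Proof.
elim: al => [|X al IH] Hal; first exact: bbisim_refl.
apply: (@bbisim_trans _ _ _ _ _ (X :: gam)); last exact: Hal (mem_head _ _).
by apply: (bisim_catl [:: X]); apply: IH => Y HY; apply: Hal; rewrite in_cons HY orbT.
Qed.

(* Visible distances to [[::]] add up along [X :: al ++ gam], and that of [gam] is
   already minimal; so [X] and [al] vanish silently and stuttering applies. *)
Lemma bisim_behead_cat X al : bisim (X :: al ++ gam) gam -> bisim (al ++ gam) gam.
Proof.
move=> Hb.
have [n0 [Hn0 Hmin]] := vpath_nil_min gam.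
have [m Hm Hw] := vpath_nil_bisim Hb Hn0.
have [m1 [m2 [Em W1 W2]]] := vpath_split_cat (r := [:: X]) Hw.
have [k1 [k2 [Ek W3 W4]]] := vpath_split_cat W2.
have Hk2 := Hmin _ W4.
have m1_0 : m1 = 0 by lia.
have k1_0 : k1 = 0 by lia.
subst m1 k1; apply: (bbisim_stutter Hb).
  by have /vpath0P := W1; exact: (tau_reach_catr (al ++ gam)).
by have /vpath0P := W3; exact: tau_reach_catr.
Qed.

Lemma bisim_cat_in_star al : bisim (al ++ gam) gam -> in_star R al.
Proof.
elim: al => [|X al IH] H; first exact: in_star_nil.
have H1 := bisim_behead_cat H.
have RX : R X.
  apply: (@bbisim_trans _ _ _ _ _ (X :: al ++ gam)) H.
  exact: (bisim_catl [:: X]) (bbisim_sym H1).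
by move=> Y; rewrite in_cons => /orP [/eqP ->|/(IH H1)].
Qed.

Local Notation stepR := (@bpa_step_R G R).
Local Notation bisimR := (@bisim_R G R).

Lemma bisimR_star_step a d b d' : in_star R a -> bisimR a d -> stepR d b d' ->
  b = tau /\ bisimR a d'.
Proof.
move=> Ha Had Hd.
have [-> Hb] := bbisim_stuck_step (fun b t => @bpa_step_R_star R a b t Ha) (bbisim_sym Had) Hd.
by split; last exact: bbisim_sym.
Qed.

(* A word [~_R]-equivalent to one over [R] can only perform silent steps, and
   by normedness it eventually reaches [R^*], where [d ++ gam ~ gam]. *)
Lemma bisimR_star_answer (C : seq V -> seq V -> Prop) a d :
  (forall x y, bisim x y -> C x y) -> (forall d', bisimR a d' -> C gam (d' ++ gam)) ->
  in_star R a -> bisimR a d -> transfer_at tau step C gam (d ++ gam).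
Proof.
move=> bisimC HC Ha; have [n] := vpath_to_nil d; move Ee: [::] => e Hn.
elim: Hn Ee => [s0|s0 b s1 t n0 Hst _ IH] Ee Had;
  (case: (classic (in_star R s0)) => Hs;
   first by apply: transfer_at_mono bisimC _;
            exact/bbisim_transfer/bbisim_sym/in_star_bisim_cat).
  by subst; case: Hs.
have [Eb Had1] := bisimR_star_step Ha Had (conj Hs Hst); subst b.
apply: transfer_at_tau_prepend (IH Ee Had1); [exact: bpa_step_catr|exact: HC].
Qed.

Lemma bisimR_star_bisim_cat a d : in_star R a -> bisimR a d -> bisim (d ++ gam) gam.
Proof.
pose B x y := (exists2 d, bisimR a d & x = d ++ gam /\ y = gam) \/
              (exists2 d, bisimR a d & x = gam /\ y = d ++ gam).
move=> Ha Had; apply: (@bbisim_upto _ _ _ _ B); last by left; exists d.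
  by move=> x y [[d0 ? [-> ->]]|[d0 ? [-> ->]]]; [right|left]; exists d0.
move=> x y [[d0 Hd0 [-> ->]]|[d0 Hd0 [-> ->]]]; last first.
  by apply: bisimR_star_answer Ha Hd0 => [x' y' Hxy|d' Hd']; [right|left; right; exists d'].
case: (classic (in_star R d0)) => Hs.
  exact: bbisim_transfer_upto (in_star_bisim_cat Hs).
move=> b x' /(bpa_step_cat (not_in_star_neq_nil Hs)) [d' Hd' ->].
have [-> Had'] := bisimR_star_step Ha Hd0 (conj Hs Hd').
by left; split=> //; left; left; exists d'.
Qed.

Lemma bisimR_bisim_cat al be : bisimR al be -> bisim (al ++ gam) (be ++ gam).
Proof.
pose B x y := exists a b, [/\ bisimR a b, x = a ++ gam & y = b ++ gam].
move=> H; apply: (@bbisim_upto _ _ _ _ B); last by exists al, be.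
  by move=> x y [a [b [Hab -> ->]]]; exists b, a; split=> //; exact: bbisim_sym.
move=> x y [a [b [Hab -> ->]]].
case: (classic (in_star R a)) => Ha.
  apply: bbisim_transfer_upto; apply: bbisim_trans (in_star_bisim_cat Ha) _.
  exact/bbisim_sym/(bisimR_star_bisim_cat Ha Hab).
move=> c x' /(bpa_step_cat (not_in_star_neq_nil Ha)) [a' Ha' ->].
case: (bbisim_transfer Hab (conj Ha Ha')) => [[-> H1]|[bk [b' [Hp [[_ Hbk] H1]]]]].
  by left; split=> //; left; exists a', b.
right; exists (bk ++ gam), (b' ++ gam); split.
  apply: (tau_path_map (f := fun w => w ++ gam) _ _ Hp).
    by move=> ? ? [_ ?]; exact: bpa_step_catr.
  by move=> w Hw; left; exists a, w.
by split; [exact: bpa_step_catr|left; exists a', b'].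
Qed.

(* If no word over [R] extended by [gam] is bisimilar to [a ++ gam], a silent path
   from [b0 ++ gam] never consumes [gam] and lifts to [L_{G,R}]. *)
Lemma tau_path_cat_bisimR a b0 u :
  (forall d, bisim (a ++ gam) (d ++ gam) -> ~ in_star R d) -> ~ in_star R b0 ->
  tau_path tau step bisim (a ++ gam) (b0 ++ gam) u ->
  exists bk, [/\ u = bk ++ gam, ~ in_star R bk &
    tau_path tau stepR (fun x y => bisim (x ++ gam) (y ++ gam)) a b0 bk].
Proof.
move=> Hno + Hp; move Et: (b0 ++ gam) Hp => t Hp; elim: Hp b0 Et.
  by move=> t0 b0 <- Hb0; exists b0; split=> //; exact: tau_path_nil.
move=> t0 t1 u0 Hst Hc _ IH b0 Et Hb0; rewrite -Et in Hst.
have [b1 Hb1 Et1] := bpa_step_cat (not_in_star_neq_nil Hb0) Hst.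
rewrite Et1 in Hc IH.
have [bk [-> Hbk Hp]] := IH b1 erefl (Hno _ Hc).
by exists bk; split=> //; apply: (tau_path_cons (t' := b1)) Hp; [exact: (conj Hb0 Hb1)|].
Qed.

Lemma bisim_cat_bisimR al be : bisim (al ++ gam) (be ++ gam) -> bisimR al be.
Proof.
pose B x y := bisim (x ++ gam) (y ++ gam).
move=> H; apply: (@bbisim_upto _ _ _ _ B) => // [x y|a b Hab c a' [Ha Ha']].
  exact: bbisim_sym.
case: (bbisim_transfer Hab (bpa_step_catr gam Ha')) => [[-> H1]|[tk [t' [Hp [Ht H1]]]]].
  by left; split=> //; left.
have Hno d : bisim (a ++ gam) (d ++ gam) -> ~ in_star R d.
  move=> Hb Hd; apply: Ha; apply: bisim_cat_in_star.
  exact: bbisim_trans Hb (in_star_bisim_cat Hd).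
have [bk [Etk Hbk Hpk]] := tau_path_cat_bisimR Hno (Hno _ Hab) Hp.
rewrite Etk in Ht; have [b' Hb' Et'] := bpa_step_cat (not_in_star_neq_nil Hbk) Ht.
right; exists bk, b'; split; first by apply: tau_path_mono Hpk => w; left.
by split; [|left; rewrite /B -Et'].
Qed.
End Gamma.
End Normed.
End BPAWords.

Theorem proposition4p6 (G : BPA) (hG : normed G) (alpha beta gamma : seq (bpa_V G)) :
  bisim (alpha ++ gamma) (beta ++ gamma) <-> bisim_R (R_of gamma) alpha beta.
Proof. by split; [exact: bisim_cat_bisimR|exact: bisimR_bisim_cat]. Qed.
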